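(* A $\mathsf{BST}^{\otimes}$-formula $\Phi$ with $n$ distinct variables is satisfiable if and only if it is satisfied by some partition with exactly $2^{n}-1$ blocks.
   Context: Sets range over the von Neumann universe of well-founded sets. For sets $s,t$, $s\otimes t=\{\{u,v\} : u\in s,\ v\in t\}$. A $\mathsf{BST}^{\otimes}$-formula is a propositional combination of atoms $x=y\cup z$, $x=y\cap z$, $x=y\setminus z$, $x=y\otimes z$, $x\subseteq y$ with $x,y,z$ set variables; a set assignment $M$ satisfies it if it is true when each variable $v$ is interpreted as $Mv$, and it is satisfiable if some set assignment on its variables satisfies it. A partition is a set of pairwise disjoint nonempty sets (blocks). For a partition $\Sigma$ and a finite set $V$ of variables, a partition assignment $\mathfrak I:V\to\mathcal P(\Sigma)$ induces the set assignment $M_{\mathfrak I}v=\bigcup\mathfrak I(v)$; $\Sigma$ satisfies $\Phi$ (with $\mathrm{Vars}(\Phi)\subseteq V$) if $M_{\mathfrak I}$ satisfies $\Phi$ for some such $\mathfrak I$. *)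

From mathcomp Require Import ssreflect ssrfun ssrbool eqtype ssrnat seq fintype.

Set Implicit Arguments.
Unset Strict Implicit.
Unset Printing Implicit Defensive.

(* Well-founded sets: Aczel's model of the (von Neumann) universe as   *)
(* well-founded trees, with extensional equality (bisimilarity).       *)
Inductive V : Type := sup : forall (A : Type), (A -> V) -> V.

Definition idx (x : V) : Type := match x with sup A _ => A end.
Definition elt (x : V) : idx x -> V := match x with sup _ f => f end.

Fixpoint Veq (x y : V) {struct x} : Prop :=
  match x, y with
  | sup A f, sup B g =>
      (forall a : A, exists b : B, Veq (f a) (g b)) /\
      (forall b : B, exists a : A, Veq (f a) (g b))
  end.

Definition Vin (x y : V) : Prop := exists b : idx y, Veq x (elt b).

Definition Vsubset (x y : V) : Prop := forall z, Vin z x -> Vin z y.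

Definition Vcup (x y : V) : V :=
  sup (fun p : idx x + idx y =>
         match p with inl a => elt a | inr b => elt b end).

Definition Vcap (x y : V) : V :=
  sup (fun p : {a : idx x | Vin (elt a) y} => elt (proj1_sig p)).

Definition Vdiff (x y : V) : V :=
  sup (fun p : {a : idx x | ~ Vin (elt a) y} => elt (proj1_sig p)).

Definition Vpair (u v : V) : V := sup (fun b : bool => if b then u else v).

Definition Votimes (s t : V) : V :=
  sup (fun p : idx s * idx t => Vpair (elt p.1) (elt p.2)).

Definition Vbigcup (x : V) : V :=
  sup (fun p : {a : idx x & idx (elt a)} => elt (projT2 p)).

Inductive bst_formula : Type :=
  | FUnion  : nat -> nat -> nat -> bst_formula
  | FInter  : nat -> nat -> nat -> bst_formula
  | FDiff   : nat -> nat -> nat -> bst_formula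
  | FOtimes : nat -> nat -> nat -> bst_formula
  | FSub    : nat -> nat -> bst_formula
  | FNot    : bst_formula -> bst_formula
  | FAnd    : bst_formula -> bst_formula -> bst_formula
  | FOr     : bst_formula -> bst_formula -> bst_formula
  | FImp    : bst_formula -> bst_formula -> bst_formula.

Fixpoint fvars (phi : bst_formula) : seq nat :=
  match phi with
  | FUnion x y z | FInter x y z | FDiff x y z | FOtimes x y z => [:: x; y; z]
  | FSub x y => [:: x; y]
  | FNot p => fvars p
  | FAnd p q | FOr p q | FImp p q => fvars p ++ fvars q
  end.

Definition nvars (phi : bst_formula) : nat := size (undup (fvars phi)).

Fixpoint bst_sat (M : nat -> V) (phi : bst_formula) : Prop :=
  match phi with
  | FUnion x y z  => Veq (M x) (Vcup (M y) (M z))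
  | FInter x y z  => Veq (M x) (Vcap (M y) (M z))
  | FDiff x y z   => Veq (M x) (Vdiff (M y) (M z))
  | FOtimes x y z => Veq (M x) (Votimes (M y) (M z))
  | FSub x y      => Vsubset (M x) (M y)
  | FNot p   => ~ bst_sat M p
  | FAnd p q => bst_sat M p /\ bst_sat M q
  | FOr p q  => bst_sat M p \/ bst_sat M q
  | FImp p q => bst_sat M p -> bst_sat M q
  end.

Definition bst_satisfiable (phi : bst_formula) : Prop :=
  exists M : nat -> V, bst_sat M phi.

Definition Vnonempty (x : V) : Prop := exists z, Vin z x.
Definition Vdisjoint (x y : V) : Prop := ~ exists z, Vin z x /\ Vin z y.

Definition is_partition (S : V) : Prop :=
  (forall b, Vin b S -> Vnonempty b) /\
  (forall b1 b2, Vin b1 S -> Vin b2 S -> ~ Veq b1 b2 -> Vdisjoint b1 b2).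

Definition Vcard_eq (S : V) (k : nat) : Prop :=
  exists f : 'I_k -> V,
    (forall i, Vin (f i) S) /\
    (forall i j, Veq (f i) (f j) -> i = j) /\
    (forall b, Vin b S -> exists i, Veq b (f i)).

(* A partition assignment J maps each variable to a subset of S (an
   element of P(S)); it induces the set assignment v |-> \bigcup J v.  *)
Definition partition_satisfies (S : V) (phi : bst_formula) : Prop :=
  exists J : nat -> V,
    (forall v, Vsubset (J v) S) /\
    bst_sat (fun v => Vbigcup (J v)) phi.

From mathcomp Require Import ssreflect ssrfun ssrbool eqtype ssrnat seq fintype.
From mathcomp Require Import choice finfun.
From Stdlib Require Import ClassicalEpsilon.

Set Implicit Arguments.
Unset Strict Implicit.
Unset Printing Implicit Defensive.

(* A partition satisfying phi directly yields a satisfying set assignment.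
   Conversely, let M satisfy phi and let X_1, ..., X_n be the values of its n
   variables.  For every nonempty pattern a in {0,1}^n the Venn region
   R_a = { z in X_1 u ... u X_n | z in X_j <-> a_j } is a set; distinct
   regions are disjoint and every X_j is the union of the regions with a_j.
   Empty regions are replaced by fresh singletons {t_a}, where
   t_a = {U, a-th numeral} cannot belong to U = \bigcup R_a by
   well-foundedness; this gives a partition with exactly 2^n - 1 blocks.
   Sending each variable to the nonempty regions below it induces a set
   assignment extensionally equal to M on the variables of phi, and
   satisfaction is invariant under extensional equality. *)

Lemma Veq_refl x : Veq x x.
Proof. by elim: x => A f IH /=; split=> a; exists a; apply: IH. Qed.

Lemma Veq_sym x y : Veq x y -> Veq y x.
Proof.
elim: x y => A f IH [B g] /= [H1 H2]; split.
- by move=> b; case: (H2 b) => a Ha; exists a; apply: IH.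
- by move=> a; case: (H1 a) => b Hb; exists b; apply: IH.
Qed.

Lemma Veq_trans x y z : Veq x y -> Veq y z -> Veq x z.
Proof.
elim: x y z => A f IH [B g] [C h] /= [H1 H2] [H3 H4]; split.
- move=> a; case: (H1 a) => b Hb; case: (H3 b) => c Hc.
  by exists c; apply: IH Hb Hc.
- move=> c; case: (H4 c) => b Hb; case: (H2 b) => a Ha.
  by exists a; apply: IH Ha Hb.
Qed.

Lemma Vext x y : Veq x y <-> forall z, Vin z x <-> Vin z y.
Proof.
case: x => A f; case: y => B g; rewrite /Vin /=; split.
- move=> [H1 H2] z; split.
  + by case=> a Ha; case: (H1 a) => b Hb; exists b; apply: Veq_trans Ha Hb.
  + case=> b Hb; case: (H2 b) => a Ha.
    by exists a; apply: Veq_trans Hb (Veq_sym Ha).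
- move=> H; split.
  + by move=> a; apply: (proj1 (H (f a))); exists a; apply: Veq_refl.
  + move=> b; case: (proj2 (H (g b))); first by exists b; apply: Veq_refl.
    by move=> a Ha; exists a; apply: Veq_sym.
Qed.

Lemma Vin_congr_l z z' x : Veq z z' -> Vin z x -> Vin z' x.
Proof. by move=> E [b Hb]; exists b; apply: Veq_trans (Veq_sym E) Hb. Qed.

Lemma Vin_congr_r z x x' : Veq x x' -> Vin z x -> Vin z x'.
Proof. by move=> /Vext E /E. Qed.

Lemma Vin_cup z x y : Vin z (Vcup x y) <-> Vin z x \/ Vin z y.
Proof.
case: x => A f; case: y => B g; rewrite /Vin /=; split.
- by case=> [[a|b] H]; [left; exists a | right; exists b].
- by case=> [[a H]|[b H]]; [exists (inl a) | exists (inr b)].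
Qed.

Lemma Vin_cap z x y : Vin z (Vcap x y) <-> Vin z x /\ Vin z y.
Proof.
case: x => A f; rewrite /Vin /=; split.
- case=> [[a Ha] /= Hz]; split; first by exists a.
  exact: Vin_congr_l (Veq_sym Hz) Ha.
- by case=> [[a Ha] Hy]; exists (exist _ a (Vin_congr_l Ha Hy)).
Qed.

Lemma Vin_diff z x y : Vin z (Vdiff x y) <-> Vin z x /\ ~ Vin z y.
Proof.
case: x => A f; rewrite /Vin /=; split.
- case=> [[a Ha] /= Hz]; split; first by exists a.
  by move=> Hy; apply: Ha; apply: Vin_congr_l Hz Hy.
- case=> [[a Ha] Hy].
  have Hn : ~ Vin (f a) y by move=> H; apply: Hy; apply: Vin_congr_l (Veq_sym Ha) H.
  by exists (exist _ a Hn).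
Qed.

Lemma Vin_pair w u v : Vin w (Vpair u v) <-> Veq w u \/ Veq w v.
Proof.
rewrite /Vin /=; split.
- by case=> [[] H]; [left | right].
- by case=> H; [exists true | exists false].
Qed.

Lemma Vpair_congr u u' v v' :
  Veq u u' -> Veq v v' -> Veq (Vpair u v) (Vpair u' v').
Proof. by move=> Hu Hv /=; split; case; [exists true|exists false|exists true|exists false]. Qed.

Lemma Vin_otimes z s t :
  Vin z (Votimes s t) <-> exists u v, [/\ Vin u s, Vin v t & Veq z (Vpair u v)].
Proof.
case: s => A f; case: t => B g; split.
- case=> [[a b] /= H]; exists (f a), (g b); split=> //.
  + by exists a; apply: Veq_refl.
  + by exists b; apply: Veq_refl.
- case=> u [v [[a Ha] [b Hb] Hz]]; exists (a, b) => /=.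
  exact: Veq_trans Hz (Vpair_congr Ha Hb).
Qed.

Lemma Vin_bigcup z x : Vin z (Vbigcup x) <-> exists y, Vin y x /\ Vin z y.
Proof.
case: x => A f; split.
- case=> [[a b] /= H]; exists (f a); split; first by exists a; apply: Veq_refl.
  by exists b.
- case=> y [[a Ha] Hz]; case: (Vin_congr_r Ha Hz) => b Hb.
  by exists (existT _ a b).
Qed.

Lemma Vcup_congr x x' y y' : Veq x x' -> Veq y y' -> Veq (Vcup x y) (Vcup x' y').
Proof. by move=> /Vext Hx /Vext Hy; apply/Vext => z; rewrite !Vin_cup Hx Hy. Qed.

Lemma Vcap_congr x x' y y' : Veq x x' -> Veq y y' -> Veq (Vcap x y) (Vcap x' y').
Proof. by move=> /Vext Hx /Vext Hy; apply/Vext => z; rewrite !Vin_cap Hx Hy. Qed.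

Lemma Vdiff_congr x x' y y' : Veq x x' -> Veq y y' -> Veq (Vdiff x y) (Vdiff x' y').
Proof. by move=> /Vext Hx /Vext Hy; apply/Vext => z; rewrite !Vin_diff Hx Hy. Qed.

Lemma Votimes_congr x x' y y' :
  Veq x x' -> Veq y y' -> Veq (Votimes x y) (Votimes x' y').
Proof.
move=> /Vext Hx /Vext Hy; apply/Vext => z; rewrite !Vin_otimes.
split=> -[u [v [Hu Hv Hz]]]; exists u, v.
- by split=> //; [apply/Hx | apply/Hy].
- by split=> //; [apply/Hx | apply/Hy].
Qed.

Lemma Vsubset_congr x x' y y' :
  Veq x x' -> Veq y y' -> (Vsubset x y <-> Vsubset x' y').
Proof. by move=> /Vext Hx /Vext Hy; split=> Hs z /Hx /Hs /Hy. Qed.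

Lemma Veq_congr a a' b b' : Veq a a' -> Veq b b' -> (Veq a b <-> Veq a' b').
Proof.
move=> Ha Hb; split=> H.
- exact: Veq_trans (Veq_sym Ha) (Veq_trans H Hb).
- exact: Veq_trans Ha (Veq_trans H (Veq_sym Hb)).
Qed.

Lemma sat_congr M M' phi :
  (forall v, v \in fvars phi -> Veq (M v) (M' v)) ->
  (bst_sat M phi <-> bst_sat M' phi).
Proof.
elim: phi => [x y z|x y z|x y z|x y z|x y|p IH|p IHp q IHq|p IHp q IHq|p IHp q IHq]
  /= E.
1-5: have Ex : Veq (M x) (M' x) by apply: E; rewrite !inE eqxx.
1-5: have Ey : Veq (M y) (M' y) by apply: E; rewrite !inE eqxx ?orbT.
1-4: have Ez : Veq (M z) (M' z) by apply: E; rewrite !inE eqxx ?orbT.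
- by apply: Veq_congr Ex (Vcup_congr Ey Ez).
- by apply: Veq_congr Ex (Vcap_congr Ey Ez).
- by apply: Veq_congr Ex (Vdiff_congr Ey Ez).
- by apply: Veq_congr Ex (Votimes_congr Ey Ez).
- exact: Vsubset_congr Ex Ey.
- by rewrite IH.
- by rewrite IHp ?IHq // => v Hv; apply: E; rewrite mem_cat Hv ?orbT.
- by rewrite IHp ?IHq // => v Hv; apply: E; rewrite mem_cat Hv ?orbT.
- by rewrite IHp ?IHq // => v Hv; apply: E; rewrite mem_cat Hv ?orbT.
Qed.

Lemma Vin_asym x y : Vin x y -> Vin y x -> False.
Proof.
elim: y x => A f IH x [a /= Ha] Hyx.
apply: (IH a (sup f)); last by exists a; apply: Veq_refl.
exact: Vin_congr_r Ha Hyx.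
Qed.

Fixpoint numeral (k : nat) : V :=
  match k with
  | 0 => sup (fun x : False => match x with end)
  | k'.+1 => sup (fun _ : unit => numeral k')
  end.

Lemma numeral_inj k l : Veq (numeral k) (numeral l) -> k = l.
Proof.
elim: k l => [|k IH] [|l] //=.
- by case=> _ H; case: (H tt).
- by case=> H _; case: (H tt).
- by case=> H _; case: (H tt) => _ /IH ->.
Qed.

Lemma Vpair_numeral_inj U i j :
  Veq (Vpair U (numeral i)) (Vpair U (numeral j)) -> i = j.
Proof.
move=> /Vext E.
have /Vin_pair [Hi|/numeral_inj //] : Vin (numeral i) (Vpair U (numeral j)).
  by apply/E/Vin_pair; right; apply: Veq_refl.
have /Vin_pair [Hj|/numeral_inj //] : Vin (numeral j) (Vpair U (numeral i)).
  by apply/E/Vin_pair; right; apply: Veq_refl.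
exact/numeral_inj/(Veq_trans Hi (Veq_sym Hj)).
Qed.

Lemma Vpair_notin U k : ~ Vin (Vpair U (numeral k)) U.
Proof. by move/Vin_asym; apply; apply/Vin_pair; left; apply: Veq_refl. Qed.

Definition Vsing (x : V) : V := sup (fun _ : unit => x).

Lemma Vin_sing z x : Vin z (Vsing x) <-> Veq z x.
Proof. by split; [case | exists tt]. Qed.

Section FreshPadding.
Variables (T : finType) (R : T -> V).

Definition fresh (t : T) : V := Vpair (Vbigcup (sup R)) (numeral (enum_rank t)).

Lemma fresh_notin t s : ~ Vin (fresh t) (R s).
Proof.
move=> H; apply: (@Vpair_notin (Vbigcup (sup R)) (enum_rank t)).
by apply/Vin_bigcup; exists (R s); split=> //; exists s; apply: Veq_refl.
Qed.

Lemma fresh_inj s t : Veq (fresh s) (fresh t) -> s = t.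
Proof. by move=> /Vpair_numeral_inj /val_inj /enum_rank_inj. Qed.

Definition block (t : T) : V :=
  if excluded_middle_informative (Vnonempty (R t)) then R t else Vsing (fresh t).

Lemma blockE t : Vnonempty (R t) -> block t = R t.
Proof. by rewrite /block; case: excluded_middle_informative. Qed.

Lemma block_nonempty t : Vnonempty (block t).
Proof.
rewrite /block; case: excluded_middle_informative => [// | R_empty] /=.
by exists (fresh t); apply/Vin_sing/Veq_refl.
Qed.

Lemma block_disjoint :
  (forall s t, s != t -> Vdisjoint (R s) (R t)) ->
  forall s t, s != t -> Vdisjoint (block s) (block t).
Proof.
move=> R_disj s t nst [z []]; rewrite /block.
case: excluded_middle_informative => [Rs_ne | Rs_empty];
  case: excluded_middle_informative => [Rt_ne | Rt_empty] /=.
- by move=> Hs Ht; apply: (R_disj _ _ nst); exists z.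
- by move=> Hs /Vin_sing Ht; apply: (@fresh_notin t s); apply: Vin_congr_l Ht Hs.
- by move=> /Vin_sing Hs Ht; apply: (@fresh_notin s t); apply: Vin_congr_l Hs Ht.
- move=> /Vin_sing Hs /Vin_sing Ht; move/negP: nst; apply.
  by apply/eqP/fresh_inj; apply: Veq_trans (Veq_sym Hs) Ht.
Qed.

End FreshPadding.

Lemma family_partition (T : finType) (B : T -> V) :
  (forall t, Vnonempty (B t)) ->
  (forall s t, s != t -> Vdisjoint (B s) (B t)) ->
  is_partition (sup B) /\ Vcard_eq (sup B) #|T|.
Proof.
move=> B_ne B_disj.
have B_inj s t : Veq (B s) (B t) -> s = t.
  move=> E; case: (eqVneq s t) => // /B_disj; case: (B_ne s) => z Hz.
  by case; exists z; split=> //; apply: Vin_congr_r E Hz.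
split; first split.
- move=> b [t /= Hb]; case: (B_ne t) => z Hz.
  by exists z; apply: Vin_congr_r (Veq_sym Hb) Hz.
- move=> b1 b2 [s /= H1] [t /= H2] Hn [z [Hz1 Hz2]].
  case: (eqVneq s t) => [est | nst].
    by apply: Hn; rewrite est in H1; apply: Veq_trans H1 (Veq_sym H2).
  apply: (B_disj _ _ nst); exists z.
  by split; [apply: Vin_congr_r H1 Hz1 | apply: Vin_congr_r H2 Hz2].
- exists (fun i => B (enum_val i)); split; [|split].
  + by move=> i; exists (enum_val i); apply: Veq_refl.
  + by move=> i j /B_inj /enum_val_inj.
  + by move=> b [t Hb]; exists (enum_rank t); rewrite enum_rankK.
Qed.

Definition holds (P : Prop) : bool :=
  if excluded_middle_informative P then true else false.

Lemma holdsP (P : Prop) : reflect P (holds P).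
Proof. by rewrite /holds; case: excluded_middle_informative => H; constructor. Qed.

Section VennRegions.
Variables (I : finType) (X : I -> V).

Definition pattern : finType := {a : {ffun I -> bool} | a != [ffun => false]}.

Lemma card_pattern : #|{: pattern}| = 2 ^ #|I| - 1.
Proof. by rewrite card_sig cardC1 card_ffun card_bool subn1. Qed.

Definition has_pattern (a : {ffun I -> bool}) (z : V) : Prop :=
  forall j, Vin z (X j) <-> a j.

Lemma has_pattern_congr a z z' : Veq z z' -> has_pattern a z -> has_pattern a z'.
Proof.
move=> E H j; rewrite -(H j).
by split; [apply: Vin_congr_l (Veq_sym E) | apply: Vin_congr_l E].
Qed.

Definition Xunion : V := Vbigcup (sup X).

Lemma Vin_Xunion z : Vin z Xunion <-> exists j, Vin z (X j).
Proof.
rewrite Vin_bigcup; split.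
- by case=> y [[j Hj] Hz]; exists j; apply: Vin_congr_r Hj Hz.
- by case=> j Hj; exists (X j); split=> //; exists j; apply: Veq_refl.
Qed.

Definition region (p : pattern) : V :=
  sup (fun w : {w : idx Xunion | has_pattern (val p) (elt w)} => elt (proj1_sig w)).

Lemma Vin_region p z : Vin z (region p) <-> Vin z Xunion /\ has_pattern (val p) z.
Proof.
split.
- case=> [[w Hw] /= Hz]; split; first by exists w.
  exact: has_pattern_congr (Veq_sym Hz) Hw.
- by case=> [[w Hw] Hp]; exists (exist _ w (has_pattern_congr Hw Hp)).
Qed.

Lemma region_disjoint p q : p != q -> Vdisjoint (region p) (region q).
Proof.
move=> npq [z [/Vin_region [_ Hp] /Vin_region [_ Hq]]]; move/negP: npq; apply.
apply/eqP/val_inj/ffunP => j.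
by apply/idP/idP; [move=> /Hp /Hq | move=> /Hq /Hp].
Qed.

Lemma region_of_point z j :
  Vin z (X j) -> exists2 p : pattern, val p j & Vin z (region p).
Proof.
move=> Hz; pose a := [ffun l => holds (Vin z (X l))].
have aj : a j by rewrite ffunE; apply/holdsP.
have a_nz : a != [ffun => false] by apply: contraTneq aj => ->; rewrite ffunE.
exists (exist _ a a_nz) => //; apply/Vin_region; split.
  by apply/Vin_Xunion; exists j.
by move=> l; rewrite ffunE; split=> /holdsP.
Qed.

Definition blocks_below (A : pred I) : V :=
  sup (fun q : {p : pattern | (exists2 j, A j & val p j) /\ Vnonempty (region p)} =>
         block region (proj1_sig q)).

Lemma Vin_blocks_below A z :
  Vin z (Vbigcup (blocks_below A)) <-> exists2 j, A j & Vin z (X j).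
Proof.
rewrite Vin_bigcup; split.
- case=> y [[[p [[j Aj pj] p_ne]] /= Hy] Hz].
  rewrite blockE // in Hy; move: (Vin_congr_r Hy Hz) => /Vin_region [_ Hp].
  by exists j => //; apply/Hp.
- case=> j Aj Hz; case: (region_of_point Hz) => p pj Hp.
  have sel : (exists2 j, A j & val p j) /\ Vnonempty (region p).
    by split; [exists j | exists z].
  exists (region p); split=> //.
  exists (exist _ p sel); change (Veq (region p) (block region p)).
  by rewrite blockE; [apply: Veq_refl | exists z].
Qed.

End VennRegions.

Lemma venn_assignment (M : nat -> V) (vs : seq nat) v :
  v \in vs ->
  Veq (M v) (Vbigcup (blocks_below (fun j : 'I_(size vs) => M (nth 0 vs j))
                                   (fun j => nth 0 vs j == v))).
Proof.
move=> v_in; apply/Vext => z; rewrite Vin_blocks_below; split.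
- move=> Hz; have v_idx : index v vs < size vs by rewrite index_mem.
  by exists (Ordinal v_idx) => /=; rewrite nth_index.
- by case=> j /eqP <-.
Qed.

Theorem mainTheorem14 (phi : bst_formula) :
  bst_satisfiable phi <->
  exists S : V,
    is_partition S /\ Vcard_eq S (2 ^ nvars phi - 1) /\
    partition_satisfies S phi.
Proof.
split; last by case=> S [_ [_ [J [_ HJ]]]]; exists (fun v => Vbigcup (J v)).
case=> M HM; set vs := undup (fvars phi).
pose X (j : 'I_(size vs)) := M (nth 0 vs j).
pose B := block (region X).
have [S_part S_card] : is_partition (sup B) /\ Vcard_eq (sup B) #|{: pattern 'I_(size vs)}|.
  apply: family_partition; first exact: block_nonempty.
  by apply: block_disjoint; apply: region_disjoint.
rewrite card_pattern card_ord in S_card.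
exists (sup B); split; [done | split; first done].
exists (fun v => blocks_below X (fun j => nth 0 vs j == v)); split.
- by move=> v z [[p _] /= Hz]; exists p.
- apply: (proj1 (sat_congr _)) HM => v v_phi.
  by apply: venn_assignment; rewrite mem_undup.
Qed.
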